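(* Consider problem (P) under the standing assumptions stated in the context, and suppose (P) is solvable. Then the set of all globally optimal solutions of (P) is $$\mathcal{S}=\{\tilde{\mathbf{x}}\in\mathbb{R}^n : \tilde{x}_j\le x^*_j(\mathbf{A},\mathbf{b}) \text{ for all } j \text{ with } k_j=0,\ \text{and } \tilde{x}_j=x^*_j(\mathbf{A},\mathbf{b}) \text{ for all } j \text{ with } k_j>0\}.$$
   Context: Max-plus algebra: $\mathbb{R}_{\max}=\mathbb{R}\cup\{-\infty\}$ with $a\oplus b=\max\{a,b\}$ and $a\otimes b=a+b$; $\varepsilon=-\infty$. For $\mathbf{A}=(a_{ij})\in\mathbb{R}_{\max}^{m\times n}$ and $\mathbf{x}=(x_j)\in\mathbb{R}^n$, $\mathbf{A}\otimes\mathbf{x}$ is the vector with $i$th component $F_i(\mathbf{x})=\max_{1\le j\le n}(a_{ij}+x_j)$, with $r+(-\infty)=-\infty$. Vectors are compared componentwise. Problem (P): given $\mathbf{A}=(a_{ij})\in\mathbb{R}_{\max}^{m\times n}$, reals $k_1,\dots,k_n\ge 0$ not all zero, and $c\in\mathbb{R}$, let $\mathcal{X}=\{\mathbf{x}\in\mathbb{R}^n : \sum_{j=1}^n k_jx_j=c\}$ and $F(\mathbf{x})=\mathbf{A}\otimes\mathbf{x}$. A point $\tilde{\mathbf{x}}\in\mathcal{X}$ is a globally optimal solution of (P) if $F(\mathbf{x})\ge F(\tilde{\mathbf{x}})$ componentwise for every $\mathbf{x}\in\mathcal{X}$; (P) is solvable if a globally optimal solution exists. Standing assumptions: (1) no row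 of $\mathbf{A}$ consists entirely of $-\infty$ entries; (2) if the $j$th column of $\mathbf{A}$ consists entirely of $-\infty$ entries, then $k_j>0$. Let $\mathcal{J}=\{j : k_j>0\}$. Define $\mathbf{b}=(b_i)$ by $b_i=-\infty$ if $a_{ij}=-\infty$ for some $j\in\mathcal{J}$, and otherwise $b_i=\frac{\sum_{j\in\mathcal{J}}k_ja_{ij}+c}{\sum_{j\in\mathcal{J}}k_j}$. Define $\mathbf{x}^*(\mathbf{A},\mathbf{b})=(x^*_j(\mathbf{A},\mathbf{b}))$ by $x^*_j(\mathbf{A},\mathbf{b})=\min_{1\le i\le m}(b_i-a_{ij})$, with the conventions, for $r\in\mathbb{R}$: $r-(-\infty)=+\infty$, $(-\infty)-r=-\infty$, $(-\infty)-(-\infty)=+\infty$; thus $x^*_j(\mathbf{A},\mathbf{b})\in\mathbb{R}\cup\{-\infty,+\infty\}$. *)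

From mathcomp Require Import all_boot all_order all_algebra.
From mathcomp Require Import constructive_ereal.
Set Implicit Arguments. Unset Strict Implicit. Unset Printing Implicit Defensive.
Import Order.TTheory GRing.Theory Num.Theory.
Local Open Scope ring_scope.
Local Open Scope ereal_scope.

Section MaxPlus.
Variables (R : realFieldType) (m n : nat).

(* Entries of A live in R_max = R \cup {-oo}; we use \bar R together with the
   hypothesis (in the theorem) that no entry equals +oo. *)

Definition Fmp (A : 'M[\bar R]_(m, n)) (x : 'I_n -> R) (i : 'I_m) : \bar R :=
  \big[maxe/-oo]_(j < n) (A i j + (x j)%:E).

Definition inX (k : 'I_n -> R) (c : R) (x : 'I_n -> R) : Prop :=
  (\sum_(j < n) k j * x j)%R = c.

Definition globally_optimal (A : 'M[\bar R]_(m, n)) (k : 'I_n -> R) (c : R)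
  (xt : 'I_n -> R) : Prop :=
  inX k c xt /\ forall x, inX k c x -> forall i, Fmp A xt i <= Fmp A x i.

Definition solvable (A : 'M[\bar R]_(m, n)) (k : 'I_n -> R) (c : R) : Prop :=
  exists xt, globally_optimal A k c xt.

Definition bvec (A : 'M[\bar R]_(m, n)) (k : 'I_n -> R) (c : R) (i : 'I_m) : \bar R :=
  if [exists j : 'I_n, (0 < k j)%R && (A i j == -oo)] then -oo
  else (((\sum_(j < n | (0 < k j)%R) k j * fine (A i j)) + c)
        / (\sum_(j < n | (0 < k j)%R) k j))%:E.

Definition msub (b a : \bar R) : \bar R :=
  match a with
  | -oo => +oo
  | a'%:E => match b with
             | -oo => -oo
             | b'%:E => (b' - a')%:E
             | +oo => +oo
             end
  | +oo => -oo
  end.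

Definition xstar (A : 'M[\bar R]_(m, n)) (b : 'I_m -> \bar R) (j : 'I_n) : \bar R :=
  \big[mine/+oo]_(i < m) msub (b i) (A i j).

End MaxPlus.

From mathcomp Require Import all_boot all_order all_algebra.
From mathcomp Require Import constructive_ereal.
Import Order.TTheory GRing.Theory Num.Theory.
Set Implicit Arguments. Unset Strict Implicit.
Local Open Scope ring_scope.
Local Open Scope ereal_scope.

(* Let J = {j | k_j > 0} and K = sum_(j in J) k_j > 0.  For a row i whose
   entries a_ij (j in J) are all finite, the value b_i is the k-weighted mean
   of a_ij + x_j over J for any feasible x, so F_i(x) >= b_i on X, with
   equality exactly when a_ij + x_j = b_i for every j in J; the point
   x_j = b_i - a_ij attains it.  If instead a_ij0 = -oo for some j0 in J, then
   F_i is unbounded below on X (push x_j0 to compensate), so solvability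
   forces every row to be finite on J.  Consequently x is optimal iff it is
   feasible with F(x) <= b.  By residuation, F(x) <= b iff x <= x*(A,b), and
   the equality case above pins x_j = x*_j for j in J.  Conversely a point
   with these properties agrees on J with an optimal point, hence is
   feasible, and F(x) <= b makes it optimal. *)

Section MaxPlusOptimality.
Variables (R : realFieldType) (m n : nat) (A : 'M[\bar R]_(m, n)).
Variables (k : 'I_n -> R) (c : R).
Hypothesis A_noninf : forall i j, A i j != +oo.
Hypothesis k_ge0 : forall j, (0 <= k j)%R.
Hypothesis k_nonzero : exists j, k j != 0%R.

Let K := (\sum_(j < n | (0 < k j)%R) k j)%R.

Lemma support_nonempty : exists j, (0 < k j)%R.
Proof. by case: k_nonzero => j hj; exists j; rewrite lt_def hj k_ge0. Qed.

Lemma K_gt0 : (0 < K)%R.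
Proof.
case: support_nonempty => j kj; apply: (lt_le_trans kj).
by rewrite /K (bigD1 j) //= lerDl sumr_ge0 // => i /andP[].
Qed.

Lemma sum_on_support (f : 'I_n -> R) :
  (\sum_(j < n) k j * f j = \sum_(j < n | (0 < k j)%R) k j * f j)%R.
Proof.
rewrite [RHS]big_mkcond /=; apply: eq_bigr => j _.
case: ifP => // /negbT; rewrite lt_def negb_and negbK => /orP[/eqP->|].
  by rewrite mul0r.
by rewrite k_ge0.
Qed.

Lemma inX_support (x y : 'I_n -> R) :
  (forall j, (0 < k j)%R -> x j = y j) -> inX k c x -> inX k c y.
Proof.
move=> xy; rewrite /inX !sum_on_support => <-.
by apply: eq_bigr => j kj; rewrite xy.
Qed.

Lemma Fmp_ge x i j : A i j + (x j)%:E <= Fmp A x i.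
Proof. exact: (le_bigmax _ (fun j => A i j + (x j)%:E)). Qed.

Lemma Fmp_le x i y : (forall j, A i j + (x j)%:E <= y) -> Fmp A x i <= y.
Proof. by move=> H; apply: bigmax_le => [|j _]; [exact: leNye|apply: H]. Qed.

Definition rowfin i := ~~ [exists j, (0 < k j)%R && (A i j == -oo)].

Definition bb i := (((\sum_(j < n | (0 < k j)%R) k j * fine (A i j)) + c) / K)%R.

Lemma bvecE i : rowfin i -> bvec A k c i = (bb i)%:E.
Proof. by rewrite /bvec /rowfin => /negbTE ->. Qed.

Lemma rowfin_entry i j : rowfin i -> (0 < k j)%R -> A i j = (fine (A i j))%:E.
Proof.
move=> /existsPn /(_ j); rewrite negb_and => /orP[/negP //|].
by move: (A_noninf i j); case: (A i j).
Qed.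

Lemma msubP (a : \bar R) b y : a != +oo -> (y%:E <= msub b%:E a) = (a + y%:E <= b%:E).
Proof.
case: a => [r| |] //= _; first by rewrite !lee_fin lerBrDl.
by rewrite leey leNye.
Qed.

(* Weighted-mean lower bound: F_i(x) >= b_i on X for finite rows. *)
Lemma Fmp_ge_b x i : inX k c x -> rowfin i -> (bb i)%:E <= Fmp A x i.
Proof.
move=> hx hi; case: support_nonempty => j0 kj0.
have hF := Fmp_ge x i j0; rewrite (rowfin_entry hi kj0) in hF.
case E: (Fmp A x i) hF => [r| |] hF //; last by rewrite leey.
rewrite lee_fin /bb ler_pdivrMr ?K_gt0 //.
rewrite -hx sum_on_support /K mulr_sumr -big_split /=.
apply: ler_sum => j kj; rewrite -mulrDr mulrC ler_wpM2r ?k_ge0 //.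
by rewrite -lee_fin EFinD -(rowfin_entry hi kj) -E Fmp_ge.
Qed.

(* Equality case: if F_i(x) <= b_i on X, every term a_ij + x_j (j in J)
   equals b_i, since a mean of values <= b_i equal to b_i is constant. *)
Lemma Fmp_eq_b_terms x i j : inX k c x -> rowfin i -> Fmp A x i <= (bb i)%:E ->
  (0 < k j)%R -> (fine (A i j) + x j = bb i)%R.
Proof.
move=> hx hi hle kj.
have term_le j' : (0 < k j')%R -> (fine (A i j') + x j' <= bb i)%R.
  move=> kj'; rewrite -lee_fin EFinD -(rowfin_entry hi kj').
  exact: le_trans (Fmp_ge x i j') hle.
have gaps_sum0 :
    (\sum_(j < n | (0 < k j)%R) k j * (bb i - (fine (A i j) + x j)) = 0)%R.
  under eq_bigr do rewrite mulrBr mulrDr.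
  rewrite sumrB big_split /= -mulr_suml -(sum_on_support x) hx.
  by rewrite [X in (X - _)%R]mulrC /bb divfK ?gt_eqF ?K_gt0 // subrr.
have gaps_ge0 j' : (0 < k j')%R -> (0 <= k j' * (bb i - (fine (A i j') + x j')))%R.
  by move=> kj'; rewrite mulr_ge0 ?k_ge0 // subr_ge0 term_le.
move/eqP: (psumr_eq0P gaps_ge0 gaps_sum0 kj).
by rewrite mulf_eq0 (gt_eqF kj) /= subr_eq0 => /eqP.
Qed.

Lemma Fmp_b_attained i : rowfin i -> exists x, inX k c x /\ Fmp A x i <= (bb i)%:E.
Proof.
move=> hi; exists (fun j => bb i - fine (A i j))%R; split.
  rewrite /inX sum_on_support.
  under eq_bigr do rewrite mulrBr.
  by rewrite sumrB -mulr_suml mulrC /bb divfK ?gt_eqF ?K_gt0 // addrC addKr.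
apply: Fmp_le => j; move: (A_noninf i j); case: (A i j) => [r| |] //= _.
  by rewrite -EFinD lee_fin addrC subrK.
exact: leNye.
Qed.

Lemma Fmp_unbounded i j0 r : (0 < k j0)%R -> A i j0 = -oo ->
  exists x, inX k c x /\ Fmp A x i <= r%:E.
Proof.
move=> kj0 aj0.
pose S := (\sum_(j < n | j != j0) k j * (r - fine (A i j)))%R.
exists (fun j => if j == j0 then (c - S) / k j0 else r - fine (A i j))%R; split.
  rewrite /inX (bigD1 j0) //= eqxx mulrC divfK ?gt_eqF //.
  rewrite (eq_bigr (fun j => k j * (r - fine (A i j)))%R) ?subrK //.
  by move=> j /negbTE ->.
apply: Fmp_le => j; case: eqP => [->|_]; first by rewrite aj0 /= leNye.
move: (A_noninf i j); case: (A i j) => [s| |] //= _; last exact: leNye.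
by rewrite -EFinD lee_fin addrC subrK.
Qed.

Lemma solvable_rowfin :
  (forall i, exists j, A i j != -oo) -> solvable A k c -> forall i, rowfin i.
Proof.
move=> rows [x0 [_ opt0]] i; apply/negP => /existsP [j0 /andP [kj0 /eqP aj0]].
have [j1 aj1] := rows i.
have := Fmp_ge x0 i j1.
move: (A_noninf i j1) aj1; case: (A i j1) => [a| |] //= _ _ h1.
have [x [hx hF]] := Fmp_unbounded (a + x0 j1 - 1)%R kj0 aj0.
have := le_trans h1 (le_trans (opt0 x hx i) hF).
by rewrite -EFinD lee_fin lerBrDr gerDl ler10.
Qed.

Section FiniteRows.
Hypothesis all_rowfin : forall i, rowfin i.

Lemma optimal_iff_below_b xt :
  globally_optimal A k c xt <-> inX k c xt /\ forall i, Fmp A xt i <= (bb i)%:E.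
Proof.
split=> [[hx opt]|[hx hle]].
  split=> // i; have [x [hx' hF]] := Fmp_b_attained (all_rowfin i).
  exact: le_trans (opt x hx' i) hF.
split=> // x hxx i; exact: le_trans (hle i) (Fmp_ge_b hxx (all_rowfin i)).
Qed.

Lemma le_xstar_iff (x : 'I_n -> R) j :
  (x j)%:E <= xstar A (bvec A k c) j <-> forall i, A i j + (x j)%:E <= (bb i)%:E.
Proof.
split=> [H i|H].
  rewrite -(msubP _ _ (A_noninf i j)) -(bvecE (all_rowfin i)).
  by apply: (le_trans H); apply: bigmin_le.
apply: le_bigmin => [|i _]; first exact: leey.
by rewrite (bvecE (all_rowfin i)) (msubP _ _ (A_noninf i j)).
Qed.

Lemma Fmp_below_b_iff (x : 'I_n -> R) :
  (forall i, Fmp A x i <= (bb i)%:E) <-> forall j, (x j)%:E <= xstar A (bvec A k c) j.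
Proof.
split=> [H j|H i].
  by apply/le_xstar_iff => i; apply: le_trans (Fmp_ge x i j) (H i).
by apply: Fmp_le => j; apply: (proj1 (le_xstar_iff x j) (H j)).
Qed.

Lemma optimal_support_xstar (x : 'I_n -> R) j : (0 < m)%N ->
  inX k c x -> (forall i, Fmp A x i <= (bb i)%:E) -> (0 < k j)%R ->
  (x j)%:E = xstar A (bvec A k c) j.
Proof.
move=> m_gt0 hx hle kj; apply/eqP; rewrite eq_le ((Fmp_below_b_iff x).1 hle j).
pose i0 := Ordinal m_gt0.
apply: (@le_trans _ _ (msub (bvec A k c i0) (A i0 j))); first exact: bigmin_le.
rewrite (bvecE (all_rowfin i0)) (rowfin_entry (all_rowfin i0) kj) /=.
by rewrite -(Fmp_eq_b_terms hx (all_rowfin i0) (hle i0) kj) lee_fin addrC addKr.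
Qed.

End FiniteRows.
End MaxPlusOptimality.

Theorem theorem4 (R : realFieldType) (m n : nat) (A : 'M[\bar R]_(m, n))
    (k : 'I_n -> R) (c : R) :
  (0 < m)%N ->
  (forall i j, A i j != +oo) ->
  (forall j, (0 <= k j)%R) ->
  (exists j, k j != 0%R) ->
  (forall i, exists j, A i j != -oo) ->
  (forall j, (forall i, A i j = -oo) -> (0 < k j)%R) ->
  solvable A k c ->
  forall xt : 'I_n -> R,
    globally_optimal A k c xt <->
    ((forall j, k j = 0%R -> (xt j)%:E <= xstar A (bvec A k c) j) /\
     (forall j, (0 < k j)%R -> (xt j)%:E = xstar A (bvec A k c) j)).
Proof.
move=> m_gt0 A_noninf k_ge0 k_nonzero rows _ hsolv xt.
have fin := solvable_rowfin A_noninf rows hsolv.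
have opt_iff := optimal_iff_below_b c A_noninf k_ge0 k_nonzero fin.
have below_iff := Fmp_below_b_iff c A_noninf fin.
have supp_eq := optimal_support_xstar (c:=c) A_noninf k_ge0 k_nonzero fin.
split=> [/(opt_iff xt) [hx hle]|[H0 Hpos]].
  split=> [j _|j kj]; last exact: supp_eq.
  by move: j; apply/(below_iff xt).
have [x0 /opt_iff [hx0 hle0]] := hsolv.
apply/(opt_iff xt); split.
  have agree_on_support j : (0 < k j)%R -> x0 j = xt j.
    by move=> kj; have := supp_eq _ _ m_gt0 hx0 hle0 kj; rewrite -Hpos // => -[].
  exact: (inX_support k_ge0 agree_on_support hx0).
apply/(below_iff xt) => j; have [kj|] := boolP (0 < k j)%R; first by rewrite Hpos.
by rewrite lt_def negb_and negbK k_ge0 orbF => /eqP /H0.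
Qed.
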